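(* Let $n\ge2$, $p\in(0,1)$, $r:=p^2+(1-p)^2$, and let $R$ be any fixed set of $k$ vertices of $\{1,\dots,n\}$ with $k\ge\frac{-3\ln n}{\ln r}$. Then $R$ is a resolving set of $G_{n,p}$ with probability at least $1-\frac{1}{2n}$. In particular, $\beta(G_{n,p})\le\big\lceil\frac{-3\ln n}{\ln r}\big\rceil$ with probability tending to $1$ as $n\to\infty$.
   Context: $G_{n,p}$ is the Erdős–Rényi random graph on vertex set $\{1,\dots,n\}$ in which each pair of distinct vertices is adjacent independently with probability $p$. A set $R$ of vertices of a graph $G$ is resolving if for all distinct vertices $u,v$ there is $w\in R$ with $d(u,w)\ne d(v,w)$, where $d$ is shortest-path distance ($\infty$ between different components). $\beta(G)$ is the minimum size of a resolving set. *)

From mathcomp Require Import all_boot.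
From Stdlib Require Import Reals ZArith.
Set Implicit Arguments. Unset Strict Implicit. Unset Printing Implicit Defensive.

(* Potential edges of a simple graph on vertex set 'I_n: pairs (i,j) with i<j. *)
Definition pairs (n : nat) := {x : 'I_n * 'I_n | x.1 < x.2}.

Definition graph (n : nat) := {set pairs n}.

Definition adj n (E : graph n) : rel 'I_n :=
  fun u v => [exists e in E, (val e == (u, v)) || (val e == (v, u))].

Definition walk n (E : graph n) (u v : 'I_n) (m : nat) : bool :=
  [exists s : m.-tuple 'I_n, path (adj E) u s && (last u s == v)].

(* shortest-path distance: Some d, or None (= infinity) for different components.
   A shortest walk is a path, so it has length < n. *)
Definition dist n (E : graph n) (u v : 'I_n) : option nat :=
  let m := find (fun m => walk E u v m) (iota 0 n) in
  if m < n then Some m else None.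

Definition resolving n (E : graph n) (R : {set 'I_n}) : bool :=
  [forall u, forall v, (u != v) ==> [exists w in R, dist E u w != dist E v w]].

(* metric dimension: minimum size of a resolving set (the full vertex set is resolving) *)
Definition beta n (E : graph n) : nat :=
  #|[arg min_(S < [set: 'I_n] | resolving E S) #|S|]|.

Definition gnp_weight n (p : R) (E : graph n) : R :=
  (p ^ #|E| * (1 - p) ^ (#|[set: pairs n]| - #|E|))%R.

Definition gnp_prob n (p : R) (A : pred (graph n)) : R :=
  foldr Rplus 0%R
    (map (fun E => if A E then gnp_weight p E else 0%R) (enum [set: graph n])).

Definition Rceil (x : R) : Z := (- Int_part (- x))%Z.

From Pilot Require Import Defs.
From mathcomp Require Import all_boot all_order all_algebra.
From mathcomp Require Import Rstruct zify.
From Stdlib Require Import Reals ZArith Lra Lia.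
Import GRing.Theory Num.Theory Order.TTheory.

Set Implicit Arguments.
Unset Strict Implicit.
Unset Printing Implicit Defensive.

(* Fix u <> v and suppose R does not resolve them.  If u or v lies in R, its
   distance 0 to itself already separates them; otherwise every w in R is at
   distance 1 from u exactly when it is adjacent to u, so w is adjacent to
   both u and v or to neither.  These |R| events involve disjoint pairs of
   potential edges, hence are independent, each of probability
   r = p^2 + (1-p)^2.  So a pair is unresolved with probability at most
   r^k <= n^-3, and a union bound over fewer than n^2/2 pairs gives the
   failure probability 1/(2n).  For the second statement take R of size
   ceil(-3 ln n / ln r) when this is at most n; otherwise the bound on
   beta is trivial. *)

Section BernoulliProduct.
Local Open Scope ring_scope.
Variables (T : finType) (p : R).

Definition bern (b : bool) : R := if b then p else 1 - p.
Definition bern_set (E : {set T}) : R := \prod_(t : T) bern (t \in E).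
Definition indicator (b : bool) : R := if b then 1 else 0.
Definition Pr (A : pred {set T}) : R := \sum_(E : {set T}) bern_set E * indicator (A E).

Lemma sum_bern_set : \sum_(E : {set T}) bern_set E = 1.
Proof.
have in_FinSet (f : {ffun T -> bool}) x : (x \in (FinSet f : {set T})) = f x.
  by rewrite /in_mem /= unlock.
have -> : \sum_(E : {set T}) bern_set E = \sum_(f : {ffun T -> bool}) \prod_(t : T) bern (f t).
  rewrite (reindex (fun f : {ffun T -> bool} => FinSet f)) /=; last first.
    exists (fun A : {set T} => [ffun x => x \in A] : {ffun T -> bool}).
      by move=> f _; apply/ffunP => x; rewrite ffunE in_FinSet.
    by move=> A _; apply/setP => x; rewrite in_FinSet ffunE.
  by apply: eq_bigr => f _; apply: eq_bigr => t _; rewrite in_FinSet.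
rewrite -(bigA_distr_bigA (fun (t : T) (b : bool) => bern b)) big1 // => t _.
by rewrite big_bool /bern /= addrC subrK.
Qed.

Definition bern_set_off (a : T) (E : {set T}) : R := \prod_(t | t != a) bern (t \in E).

Lemma bern_set_split a E : bern_set E = bern (a \in E) * bern_set_off a E.
Proof. by rewrite /bern_set (bigD1 a). Qed.

Lemma bern_set_offU a E : bern_set_off a (a |: E) = bern_set_off a E.
Proof. by apply: eq_bigr => t ta; rewrite in_setU1 (negbTE ta). Qed.

Lemma bern_set_offD a E : bern_set_off a (E :\ a) = bern_set_off a E.
Proof. by apply: eq_bigr => t ta; rewrite in_setD1 ta. Qed.

Lemma sum_setU1 (a : T) (g : {set T} -> R) :
  \sum_(E : {set T} | a \notin E) g (a |: E) = \sum_(E : {set T} | a \in E) g E.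
Proof.
pose flip (E : {set T}) := if a \in E then E :\ a else a |: E.
have flipK : involutive flip.
  move=> E; rewrite /flip; case: (boolP (a \in E)) => aE.
    by rewrite in_setD1 eqxx /= setD1K.
  by rewrite setU11 setU1K.
rewrite [RHS](reindex_inj (inv_inj flipK)) [LHS]big_mkcond [RHS]big_mkcond.
apply: eq_bigr => E _; rewrite /flip; case: (boolP (a \in E)) => aE /=.
  by rewrite in_setD1 eqxx.
by rewrite setU11.
Qed.

Lemma sum_setD1 (a : T) (g : {set T} -> R) :
  \sum_(E : {set T} | a \in E) g (E :\ a) = \sum_(E : {set T} | a \notin E) g E.
Proof. by rewrite -sum_setU1; apply: eq_bigr => E aE; rewrite (setU1K aE). Qed.

Lemma sum_bern_set_cond (a : T) (f : {set T} -> R) :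
  \sum_(E : {set T}) bern_set E * f E =
  p * \sum_(E : {set T}) bern_set E * f (a |: E)
  + (1 - p) * \sum_(E : {set T}) bern_set E * f (E :\ a).
Proof.
set S1 := \sum_(E : {set T} | a \in E) bern_set_off a E * f E.
set S0 := \sum_(E : {set T} | a \notin E) bern_set_off a E * f E.
have split_at_a (g : {set T} -> R) : \sum_(E : {set T}) bern_set E * g E =
    \sum_(E : {set T} | a \in E) p * (bern_set_off a E * g E)
    + \sum_(E : {set T} | a \notin E) (1 - p) * (bern_set_off a E * g E).
  rewrite (bigID (fun E : {set T} => a \in E)) /=; congr (_ + _);
    apply: eq_bigr => E aE; rewrite (bern_set_split a) /bern ?aE ?(negbTE aE) mulrA //.
have -> : \sum_(E : {set T}) bern_set E * f E = p * S1 + (1 - p) * S0.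
  by rewrite split_at_a -!mulr_sumr.
have -> : \sum_(E : {set T}) bern_set E * f (a |: E) = S1.
  rewrite split_at_a -!mulr_sumr.
  have -> : \sum_(E : {set T} | a \in E) bern_set_off a E * f (a |: E) = S1.
    by apply: eq_bigr => E aE; congr (_ * f _); apply/setUidPr; rewrite sub1set.
  have -> : \sum_(E : {set T} | a \notin E) bern_set_off a E * f (a |: E) = S1.
    by rewrite /S1 -sum_setU1; apply: eq_bigr => E _; rewrite bern_set_offU.
  by rewrite -mulrDl addrC subrK mul1r.
have -> : \sum_(E : {set T}) bern_set E * f (E :\ a) = S0.
  rewrite split_at_a -!mulr_sumr.
  have -> : \sum_(E : {set T} | a \notin E) bern_set_off a E * f (E :\ a) = S0.
    apply: eq_bigr => E aE; congr (_ * f _).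
    by apply/setDidPl; rewrite disjoint_sym disjoints1.
  have -> : \sum_(E : {set T} | a \in E) bern_set_off a E * f (E :\ a) = S0.
    by rewrite /S0 -sum_setD1; apply: eq_bigr => E _; rewrite bern_set_offD.
  by rewrite -mulrDl addrC subrK mul1r.
by [].
Qed.

Lemma sum_bern_set_agree (a b : T) (g : {set T} -> R) : a != b ->
  (forall E, g (a |: E) = g E) -> (forall E, g (E :\ a) = g E) ->
  (forall E, g (b |: E) = g E) -> (forall E, g (E :\ b) = g E) ->
  \sum_(E : {set T}) bern_set E * (g E * indicator ((a \in E) == (b \in E))) =
  (p ^+ 2 + (1 - p) ^+ 2) * \sum_(E : {set T}) bern_set E * g E.
Proof.
move=> ab gaU gaD gbU gbD; have ba : b != a by rewrite eq_sym.
have in_b : \sum_(E : {set T}) bern_set E * (g E * indicator (b \in E))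
    = p * \sum_(E : {set T}) bern_set E * g E.
  rewrite (sum_bern_set_cond b).
  under eq_bigr => E _ do rewrite setU11 gbU /indicator mulr1.
  under [X in _ + _ * X]eq_bigr => E _ do rewrite in_setD1 eqxx /indicator !mulr0.
  by rewrite big1_eq mulr0 addr0.
have notin_b : \sum_(E : {set T}) bern_set E * (g E * indicator (b \notin E))
    = (1 - p) * \sum_(E : {set T}) bern_set E * g E.
  rewrite (sum_bern_set_cond b).
  under eq_bigr => E _ do rewrite setU11 /indicator !mulr0.
  under [X in _ + _ * X]eq_bigr => E _ do rewrite in_setD1 eqxx gbD /indicator mulr1.
  by rewrite big1_eq mulr0 add0r.
rewrite (sum_bern_set_cond a).
under eq_bigr => E _ do rewrite setU11 in_setU1 (negbTE ba) /= gaU.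
rewrite [X in _ + _ * X](eq_bigr
    (fun E => bern_set E * (g E * indicator (b \notin E)))); last first.
  by move=> E _; rewrite !in_setD1 eqxx ba gaD; case: (b \in E).
by rewrite in_b notin_b !mulrA -mulrDl !expr2.
Qed.

Lemma indicator_ge0 b : 0 <= indicator b.
Proof. by case: b; rewrite /indicator. Qed.

Lemma indicator_le (b1 b2 : bool) : (b1 -> b2) -> indicator b1 <= indicator b2.
Proof. by case: b1; case: b2 => // h; have := h isT. Qed.

Lemma indicatorM (b1 b2 : bool) : indicator (b1 && b2) = indicator b1 * indicator b2.
Proof. by case: b1; case: b2; rewrite /indicator /= ?mul1r ?mul0r. Qed.

Lemma Pr_predT : Pr predT = 1.
Proof. by rewrite -sum_bern_set; apply: eq_bigr => E _; rewrite /indicator mulr1. Qed.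

Lemma Pr_predC (A : pred {set T}) : Pr A + Pr (predC A) = 1.
Proof.
rewrite -big_split /= -sum_bern_set; apply: eq_bigr => E _.
by rewrite -mulrDr /indicator; case: (A E); rewrite /= ?addr0 ?add0r mulr1.
Qed.

Hypotheses (p_ge0 : 0 <= p) (p_le1 : p <= 1).

Lemma bern_set_ge0 (E : {set T}) : 0 <= bern_set E.
Proof. by apply: prodr_ge0 => t _; rewrite /bern; case: (t \in E); rewrite ?subr_ge0. Qed.

Lemma Pr_ge0 (A : pred {set T}) : 0 <= Pr A.
Proof. by apply: sumr_ge0 => E _; rewrite mulr_ge0 ?bern_set_ge0 ?indicator_ge0. Qed.

Lemma Pr_le1 (A : pred {set T}) : Pr A <= 1.
Proof. by rewrite -(Pr_predC A) lerDl Pr_ge0. Qed.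

Lemma Pr_sub (A B : pred {set T}) : (forall E, A E -> B E) -> Pr A <= Pr B.
Proof.
move=> AB; apply: ler_sum => E _.
by rewrite ler_wpM2l ?bern_set_ge0 //; apply: indicator_le; apply: AB.
Qed.

End BernoulliProduct.

Arguments Pr {T} p A.
Arguments bern_set {T} p E.

Section Graphs.
Variable n : nat.
Implicit Types (E : graph n) (R : {set 'I_n}) (x y u v w : 'I_n).

Lemma adjC E x y : adj E x y = adj E y x.
Proof. by apply: eq_existsb => e; rewrite orbC. Qed.

Lemma adj_edge x y : x != y -> exists e : pairs n,
  (val e = (x, y) \/ val e = (y, x)) /\ forall E, adj E x y = (e \in E).
Proof.
wlog xy : x y / x < y => [hwlog xNy|_].
  case: (ltngtP x y) => [xy|yx|/val_inj exy]; last by rewrite exy eqxx in xNy.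
    exact: hwlog.
  have [e [ve adj_e]] := hwlog y x yx (negbT (ltn_eqF yx)).
  by exists e; split; [case: ve; auto | move=> E; rewrite adjC].
exists (exist _ (x, y) xy); split=> [|E]; first by left.
apply/existsP/idP => [[e' /andP [e'E /orP [/eqP h | /eqP h]]] | eE].
- by have <- : e' = exist _ (x, y) xy by apply: val_inj.
- by move: (valP e'); rewrite h /= ltnNge (ltnW xy).
- by exists (exist _ (x, y) xy); rewrite eE eqxx.
Qed.

Lemma adj_setU1 (e : pairs n) E x y : val e != (x, y) -> val e != (y, x) ->
  adj (e |: E) x y = adj E x y.
Proof.
move=> exy eyx; apply: eq_existsb => e'; rewrite in_setU1.
by case: eqP => [->|//]; rewrite (negbTE exy) (negbTE eyx) /= andbF.
Qed.

Lemma adj_setD1 (e : pairs n) E x y : val e != (x, y) -> val e != (y, x) ->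
  adj (E :\ e) x y = adj E x y.
Proof.
move=> exy eyx; apply: eq_existsb => e'; rewrite in_setD1.
by case: eqP => [->|//]; rewrite (negbTE exy) (negbTE eyx) /= andbF.
Qed.

Lemma edge_avoids (e : pairs n) w u x y : (val e = (w, u) \/ val e = (u, w)) ->
  x != w -> x != u -> val e != (x, y) /\ val e != (y, x).
Proof.
move=> ve xw xu; split; apply/eqP => h';
  by case: ve => ve; move: h'; rewrite ve => -[] *; subst; rewrite ?eqxx in xw xu.
Qed.

Lemma walk0 E x y : walk E x y 0 = (x == y).
Proof.
apply/existsP/idP => [[s /andP [_ /eqP <-]]|/eqP ->]; first by rewrite tuple0.
by exists [tuple]; rewrite /= eqxx.
Qed.

Lemma walk1 E x y : walk E x y 1 = adj E x y.
Proof.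
apply/existsP/idP => [[[[|z [|]] //= _ /andP [/andP [h _] /eqP <-]]]|h] //.
by exists [tuple y]; rewrite /= h eqxx.
Qed.

Lemma n_gt0 x : 0 < n.
Proof. exact: leq_ltn_trans (leq0n x) (ltn_ord x). Qed.

Lemma iota0_gt0 x : iota 0 n = 0 :: iota 1 n.-1.
Proof. by rewrite -(prednK (n_gt0 x)). Qed.

Lemma iota0_gt1 : 2 <= n -> iota 0 n = [:: 0, 1 & iota 2 (n - 2)].
Proof. by case: n => [|[|m]] //= _; rewrite subn2. Qed.

Lemma dist_refl E x : Defs.dist E x x = Some 0.
Proof. by rewrite /Defs.dist (iota0_gt0 x) /= walk0 eqxx /= (n_gt0 x). Qed.

Lemma dist_neq0 E x y : x != y -> Defs.dist E x y != Some 0.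
Proof. by move=> xy; rewrite /Defs.dist (iota0_gt0 x) /= walk0 (negbTE xy); case: ifP. Qed.

Lemma dist_adj E x y : 2 <= n -> x != y -> adj E x y -> Defs.dist E x y = Some 1.
Proof. by move=> n2 xy h; rewrite /Defs.dist iota0_gt1 //= walk0 (negbTE xy) walk1 h /= n2. Qed.

Lemma dist_nadj E x y : 2 <= n -> x != y -> ~~ adj E x y -> Defs.dist E x y != Some 1.
Proof.
move=> n2 xy h; rewrite /Defs.dist iota0_gt1 //= walk0 (negbTE xy) walk1 (negbTE h) /=.
by case: ifP.
Qed.

Definition unresolved E R u v := [forall w in R, Defs.dist E u w == Defs.dist E v w].

Lemma unresolved_pair E R : ~~ resolving E R -> exists u v, (u < v) && unresolved E R u v.
Proof.
move/forallPn => [u /forallPn [v]]; rewrite negb_imply => /andP [uv /existsPn H].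
have duv w : w \in R -> Defs.dist E u w = Defs.dist E v w.
  by move=> wR; move: (H w); rewrite wR /= negbK => /eqP.
case: (ltngtP u v) => [lt|gt|/val_inj e]; last by rewrite e eqxx in uv.
- by exists u, v; rewrite lt; apply/forall_inP => w wR; rewrite duv.
- by exists v, u; rewrite gt; apply/forall_inP => w wR; rewrite duv.
Qed.

Lemma unresolved_in E R u v : u != v -> (u \in R) || (v \in R) -> unresolved E R u v = false.
Proof.
move=> uv /orP [uR|vR]; apply/negbTE/forall_inPn.
- by exists u; rewrite // dist_refl eq_sym dist_neq0 // eq_sym.
- by exists v; rewrite // dist_refl dist_neq0.
Qed.

Definition same_adj (W : {set 'I_n}) u v E := [forall w in W, adj E w u == adj E w v].

Lemma unresolved_same_adj E R u v : 2 <= n -> u \notin R -> v \notin R ->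
  unresolved E R u v -> same_adj R u v E.
Proof.
move=> n2 uR vR /forall_inP H; apply/forall_inP => w wR.
have uw : u != w by apply: contraNneq uR => ->.
have vw : v != w by apply: contraNneq vR => ->.
move: (H w wR); rewrite (adjC E w u) (adjC E w v).
case: (boolP (adj E u w)) => hu; case: (boolP (adj E v w)) => hv //.
- by rewrite (dist_adj n2 uw hu) eq_sym (negbTE (dist_nadj n2 vw hv)).
- by rewrite (dist_adj n2 vw hv) (negbTE (dist_nadj n2 uw hu)).
Qed.

Lemma same_adj_setD1 (W : {set 'I_n}) u v w E : w \in W ->
  same_adj W u v E = (adj E w u == adj E w v) && same_adj (W :\ w) u v E.
Proof.
move=> wW; apply/forall_inP/andP => [H|[h1 /forall_inP h2] x xW].
  by split; [exact: H | apply/forall_inP => x /setD1P [_ xW]; apply: H].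
by case: (x =P w) => [->//|/eqP xw]; apply: h2; rewrite in_setD1 xw.
Qed.

Lemma same_adj_toggle (W : {set 'I_n}) u v w z (e : pairs n) E :
  (val e = (w, z) \/ val e = (z, w)) -> z \notin W -> w \notin W ->
  same_adj W u v (e |: E) = same_adj W u v E /\ same_adj W u v (E :\ e) = same_adj W u v E.
Proof.
move=> ve zW wW; split; apply: eq_forallb => x; case: (boolP (x \in W)) => xW //=;
  have xw : x != w by apply: contraNneq wW => <-.
all: have xz : x != z by apply: contraNneq zW => <-.
all: have [h1 h2] := @edge_avoids e w z x u ve xw xz; have [h3 h4] := @edge_avoids e w z x v ve xw xz.
all: by rewrite ?adj_setU1 ?adj_setD1.
Qed.

End Graphs.

Section UnionBound.
Local Open Scope ring_scope.
Variables (n : nat) (p : R).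
Let r := p ^+ 2 + (1 - p) ^+ 2.

Lemma Pr_same_adj (W : {set 'I_n}) u v : u != v -> u \notin W -> v \notin W ->
  Pr p (same_adj W u v) = r ^+ #|W|.
Proof.
move=> uv uW vW; move cardW: #|W| => m; elim: m W cardW uW vW => [|m IH] W cardW uW vW.
  have -> : W = set0 by apply/eqP; rewrite -cards_eq0 cardW.
  rewrite expr0 -(@Pr_predT (pairs n) p); apply: eq_bigr => E _.
  by congr (_ * indicator _); apply/forall_inP => w; rewrite in_set0.
have [w wW] : exists w, w \in W by apply/set0Pn; rewrite -cards_eq0 cardW.
set W' := W :\ w.
have cardW' : #|W'| = m by move: cardW; rewrite (cardsD1 w) wW add1n => -[].
have uW' : u \notin W' by rewrite in_setD1 (negbTE uW) andbF.
have vW' : v \notin W' by rewrite in_setD1 (negbTE vW) andbF.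
have wW' : w \notin W' by rewrite in_setD1 eqxx.
have wu : w != u by apply: contraNneq uW => <-.
have wv : w != v by apply: contraNneq vW => <-.
have [a [va adj_a]] := adj_edge wu.
have [b [vb adj_b]] := adj_edge wv.
have ab : a != b.
  apply/eqP => eab; have vw : v != w by rewrite eq_sym.
  have vu : v != u by rewrite eq_sym.
  have [h1 h2] := @edge_avoids _ a w u v w va vw vu.
  by case: vb => vb; rewrite eab vb eqxx in h1 h2.
rewrite /Pr (eq_bigr (fun E => bern_set p E *
    (indicator (same_adj W' u v E) * indicator ((a \in E) == (b \in E))))); last first.
  move=> E _; rewrite (same_adj_setD1 u v E wW) indicatorM adj_a adj_b.
  by rewrite [indicator _ * _]mulrC.
rewrite sum_bern_set_agree //.
- by move: (IH W' cardW' uW' vW'); rewrite /Pr => ->; rewrite [in RHS]exprS.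
- by move=> E; have [-> _] := same_adj_toggle u v E va uW' wW'.
- by move=> E; have [_ ->] := same_adj_toggle u v E va uW' wW'.
- by move=> E; have [-> _] := same_adj_toggle u v E vb vW' wW'.
- by move=> E; have [_ ->] := same_adj_toggle u v E vb vW' wW'.
Qed.

Definition npairs : R := \sum_(u : 'I_n) \sum_(v : 'I_n) indicator (u < v)%nat.

Lemma npairs_ge0 : 0 <= npairs.
Proof. by apply: sumr_ge0 => u _; apply: sumr_ge0 => v _; apply: indicator_ge0. Qed.

Lemma npairs_le : npairs + npairs <= n%:R * n%:R.
Proof.
have npairsC : \sum_(u : 'I_n) \sum_(v : 'I_n) indicator (v < u)%nat = npairs.
  by rewrite exchange_big.
rewrite -{1}npairsC -big_split /=.
apply: le_trans (_ : \sum_(u : 'I_n) \sum_(v : 'I_n) (1 : R) <= _).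
  apply: ler_sum => u _; rewrite -big_split /=; apply: ler_sum => v _.
  by rewrite /indicator; case: ltngtP; rewrite ?addr0 ?add0r.
by rewrite !sumr_const card_ord -mulr_natr mul1r mulr_natr.
Qed.

Lemma indicator_nonresolving (E : graph n) (R : {set 'I_n}) :
  indicator (~~ resolving E R) <=
  \sum_(u : 'I_n) \sum_(v : 'I_n) indicator ((u < v)%nat && unresolved E R u v).
Proof.
have sum_ge0 (f : 'I_n -> 'I_n -> bool) (P : pred 'I_n) :
    0 <= \sum_(u | P u) \sum_(v : 'I_n) indicator (f u v).
  by apply: sumr_ge0 => u _; apply: sumr_ge0 => v _; apply: indicator_ge0.
case: (boolP (resolving E R)) => /= [_|/unresolved_pair [u [v uv]]].
  exact: (sum_ge0 _ predT).
rewrite (bigD1 u) //= (bigD1 v) //= uv {1}/indicator -addrA lerDl addr_ge0 //.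
by apply: sumr_ge0 => ? _; apply: indicator_ge0.
Qed.

Hypotheses (p_ge0 : 0 <= p) (p_le1 : p <= 1).

Lemma Pr_unresolved (R : {set 'I_n}) u v : (2 <= n)%nat -> u != v ->
  Pr p (fun E => unresolved E R u v) <= r ^+ #|R|.
Proof.
move=> n2 uv; case: (boolP ((u \in R) || (v \in R))) => [uvR|].
  rewrite /Pr big1 ?exprn_ge0 ?addr_ge0 ?sqr_ge0 // => E _.
  by rewrite unresolved_in // /indicator mulr0.
rewrite negb_or => /andP [uR vR]; rewrite -(Pr_same_adj uv uR vR).
by apply: Pr_sub => // E; apply: unresolved_same_adj.
Qed.

Lemma Pr_nonresolving (R : {set 'I_n}) : (2 <= n)%nat ->
  Pr p (fun E => ~~ resolving E R) <= r ^+ #|R| * npairs.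
Proof.
move=> n2; apply: le_trans (_ : \sum_(E : graph n) bern_set p E *
    \sum_(u : 'I_n) \sum_(v : 'I_n) indicator ((u < v)%nat && unresolved E R u v) <= _).
  by apply: ler_sum => E _; rewrite ler_wpM2l ?bern_set_ge0 ?indicator_nonresolving.
under eq_bigr => E _ do rewrite mulr_sumr; rewrite exchange_big mulr_sumr.
apply: ler_sum => u _.
under eq_bigr => E _ do rewrite mulr_sumr; rewrite exchange_big mulr_sumr.
apply: ler_sum => v _; case: (ltnP u v) => uv /=.
  by rewrite mulr1; apply: Pr_unresolved => //; rewrite neq_ltn uv.
by rewrite mulr0 big1 // => E _; rewrite /indicator mulr0.
Qed.

End UnionBound.

Section MetricDimension.
Local Open Scope ring_scope.

Lemma gnp_probE n p (A : pred (graph n)) : gnp_prob p A = Pr p A.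
Proof.
have weightE (E : graph n) : gnp_weight p E = bern_set p E.
  rewrite /gnp_weight /bern_set (bigID (fun t => t \in E)) /=.
  rewrite (eq_bigr (fun _ => p)); last by move=> t ->.
  rewrite [X in _ * X](eq_bigr (fun _ => 1 - p)); last by move=> t /negbTE ->.
  by rewrite !prodr_const !RpowE cardsT -(cardC E) addKn.
rewrite /gnp_prob foldrE big_map big_enum big_mkcond /=.
apply: eq_bigr => E _; rewrite in_setT weightE /indicator.
by case: (A E); rewrite ?mulr1 ?mulr0.
Qed.

Lemma resolving_setT n (E : graph n) : resolving E setT.
Proof.
apply/forallP => u; apply/forallP => v; apply/implyP => uv; apply/existsP.
by exists u; rewrite in_setT dist_refl eq_sym dist_neq0 // eq_sym.
Qed.

Lemma beta_le n (E : graph n) (R : {set 'I_n}) : resolving E R -> (beta E <= #|R|)%nat.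
Proof.
by move=> hR; rewrite /beta; case: arg_minnP => [|S _ minS]; [exact: resolving_setT | exact: minS].
Qed.

Lemma beta_le_n n (E : graph n) : (beta E <= n)%nat.
Proof. by rewrite /beta; apply: leq_trans (max_card _) _; rewrite card_ord. Qed.

End MetricDimension.

Open Scope R_scope.

Lemma prob_bounds p : 0 < p < 1 -> (0 <= p)%O /\ (p <= 1)%O.
Proof. by move=> hp; split; apply/RleP; lra. Qed.

Lemma agree_prob_bounds p : 0 < p < 1 -> 0 < p ^ 2 + (1 - p) ^ 2 < 1.
Proof. by move=> [p0 p1]; split; nra. Qed.

Lemma agree_prob_pow_le p k n : (2 <= n)%nat -> 0 < p < 1 ->
  - 3 * ln (INR n) / ln (p ^ 2 + (1 - p) ^ 2) <= INR k ->
  (p ^ 2 + (1 - p) ^ 2) ^ k <= / INR n ^ 3.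
Proof.
move=> n2 hp hk; set r := p ^ 2 + (1 - p) ^ 2 in hk *.
have [r0 r1] := agree_prob_bounds hp.
have n_ge2 : 2 <= INR n by apply: (le_INR 2); apply/ssrnat.leP.
have ln_r : ln r < 0 by rewrite -ln_1; apply: ln_increasing.
have ln_rk : ln r * INR k <= - 3 * ln (INR n).
  have := Rmult_le_compat_neg_l (ln r) _ _ (Rlt_le _ _ ln_r) hk.
  by have -> : ln r * (- 3 * ln (INR n) / ln r) = - 3 * ln (INR n) by field; lra.
have n3_gt0 : 0 < INR n ^ 3 by apply: pow_lt; lra.
have ln_inv_n3 : ln (/ INR n ^ 3) = - 3 * ln (INR n).
  by rewrite ln_Rinv // ln_pow /=; lra.
apply: Rnot_lt_le => hlt.
have := ln_increasing _ _ (Rinv_0_lt_compat _ n3_gt0) hlt.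
rewrite ln_pow ?ln_inv_n3; [lra | exact: r0].
Qed.

Lemma Pr_resolving_ge n p (R : {set 'I_n}) : (2 <= n)%nat -> 0 < p < 1 ->
  - 3 * ln (INR n) / ln (p ^ 2 + (1 - p) ^ 2) <= INR #|R| ->
  1 - 1 / (2 * INR n) <= Pr p (fun E => resolving E R).
Proof.
move=> n2 hp hR.
have [p_ge0 p_le1] := prob_bounds hp.
have total := Pr_predC p (fun E => resolving E R).
have failure : Pr p (fun E => ~~ resolving E R) <= (p ^ 2 + (1 - p) ^ 2) ^ #|R| * npairs n.
  by apply/RleP; rewrite !RealsE; apply: Pr_nonresolving.
have npairs_bound : npairs n + npairs n <= INR n * INR n.
  by apply/RleP; rewrite INRE; apply: npairs_le.
have npairs_nneg : 0 <= npairs n by apply/RleP; apply: npairs_ge0.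
have rk := agree_prob_pow_le n2 hp hR.
have n_ge2 : 2 <= INR n by apply: (le_INR 2); apply/ssrnat.leP.
have n3_gt0 : 0 < INR n ^ 3 by apply: pow_lt; lra.
have : (p ^ 2 + (1 - p) ^ 2) ^ #|R| * npairs n <= / INR n ^ 3 * (INR n * INR n / 2).
  apply: Rle_trans (Rmult_le_compat_r _ _ _ npairs_nneg rk) _.
  by apply: Rmult_le_compat_l; [apply: Rlt_le; apply: Rinv_0_lt_compat | lra].
have -> : / INR n ^ 3 * (INR n * INR n / 2) = 1 / (2 * INR n) by field; lra.
change (Pr p (fun E => resolving E R) + Pr p (fun E => ~~ resolving E R) = 1) in total.
lra.
Qed.

(* If ceil(-3 ln n / ln r) exceeds n the event is certain, since beta <= n. *)
Lemma Pr_beta_le_ge n p : (2 <= n)%nat -> 0 < p < 1 ->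
  1 - 1 / (2 * INR n) <= Pr p (fun E : graph n =>
     (Z.of_nat (beta E) <=? Rceil (- 3 * ln (INR n) / ln (p ^ 2 + (1 - p) ^ 2)))%Z).
Proof.
move=> n2 hp; set x := - 3 * ln (INR n) / ln (p ^ 2 + (1 - p) ^ 2).
have [p_ge0 p_le1] := prob_bounds hp.
have [r0 r1] := agree_prob_bounds hp.
have n_ge2 : 2 <= INR n by apply: (le_INR 2); apply/ssrnat.leP.
have ln_r : ln (p ^ 2 + (1 - p) ^ 2) < 0 by rewrite -ln_1; apply: ln_increasing.
have ln_n : 0 < ln (INR n) by rewrite -ln_1; apply: ln_increasing; lra.
have x_gt0 : 0 < x by rewrite /x /Rdiv; have := Rinv_lt_0_compat _ ln_r; nra.
set c := Rceil x.
have x_le_c : x <= IZR c.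
  by rewrite /c /Rceil opp_IZR; have [hb _] := base_Int_part (- x); lra.
have c_gt0 : (0 < c)%Z by apply: lt_0_IZR; lra.
have Pr_mono (A B : pred (graph n)) : (forall E, A E -> B E) -> Pr p A <= Pr p B.
  by move=> AB; apply/RleP; apply: Pr_sub.
case: (Z_le_gt_dec c (Z.of_nat n)) => [c_le_n|c_gt_n].
- pose k := Z.to_nat c.
  have kc : Z.of_nat k = c by rewrite /k Z2Nat.id //; lia.
  have k_le_n : (k <= n)%nat by apply/ssrnat.leP; lia.
  pose R := [set widen_ord k_le_n i | i : 'I_k].
  have card_R : #|R| = k.
    by rewrite card_imset ?cardsT ?card_ord // => i j /(congr1 val) /= /val_inj.
  have hR : x <= INR #|R| by rewrite card_R INR_IZR_INZ kc.
  apply: Rle_trans (Pr_resolving_ge n2 hp hR) (Pr_mono _ _ _) => E /beta_le.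
  by rewrite card_R => /ssrnat.leP beta_k; apply/Z.leb_le; lia.
- apply: Rle_trans _ (Pr_mono predT _ _) => [|E _]; last first.
    by have /ssrnat.leP := beta_le_n E; move=> beta_n; apply/Z.leb_le; lia.
  rewrite Pr_predT -R1E; have : 0 < 1 / (2 * INR n) by apply: Rdiv_lt_0_compat; lra.
  lra.
Qed.

Lemma Un_cv_1_of_lower_bound (u : nat -> R) :
  (forall n, (2 <= n)%nat -> 1 - 1 / (2 * INR n) <= u n <= 1) -> Un_cv u 1.
Proof.
move=> hu eps eps_gt0.
have [up_gt _] := archimed (/ eps).
have inv_eps_gt0 : 0 < / eps by apply: Rinv_0_lt_compat.
have up_ge0 : (0 <= up (/ eps))%Z by apply: le_0_IZR; lra.
exists (Z.to_nat (up (/ eps)) + 2)%nat => n hn.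
have n2 : (2 <= n)%nat by apply/ssrnat.leP; lia.
have n_ge : IZR (up (/ eps)) <= INR n.
  by rewrite -(Z2Nat.id _ up_ge0) -INR_IZR_INZ; apply: le_INR; lia.
have inv_n : / INR n < eps.
  rewrite -(Rinv_inv eps); apply: Rinv_lt_contravar; [apply: Rmult_lt_0_compat|]; lra.
have [lo hi] := hu n n2.
have half_inv : 1 / (2 * INR n) = / INR n / 2 by field; lra.
rewrite /Rdist Rabs_left1; lra.
Qed.

Theorem corollary4p4 :
  (forall (n : nat) (p : R) (Rs : {set 'I_n}),
     (2 <= n)%nat -> (0 < p < 1)%R ->
     (- 3 * ln (INR n) / ln (p ^ 2 + (1 - p) ^ 2) <= INR #|Rs|)%R ->
     (1 - 1 / (2 * INR n) <= @gnp_prob n p (fun E => resolving E Rs))%R)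
  /\
  (forall p : R, (0 < p < 1)%R ->
     Un_cv (fun n => @gnp_prob n p (fun E =>
              (Z.of_nat (beta E) <=? Rceil (- 3 * ln (INR n) / ln (p ^ 2 + (1 - p) ^ 2)))%Z))
           1%R).
Proof.
split=> [n p Rs n2 hp hRs | p hp]; first by rewrite gnp_probE; apply: Pr_resolving_ge.
apply: Un_cv_1_of_lower_bound => n n2; rewrite gnp_probE; split.
- exact: Pr_beta_le_ge.
- by have [p_ge0 p_le1] := prob_bounds hp; apply/RleP; apply: Pr_le1.
Qed.
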